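(* The linear maps $\mathrm{d}^i_{0,0}:\mathcal{W}\to\mathcal{F}_0\otimes\mathcal{F}_0$ ($i=1,\dots,5$) given for $m,n\in\mathbb{Z}$ by $\mathrm{d}^1_{0,0}(L_m)=v_0\otimes v_m$, $\mathrm{d}^2_{0,0}(L_m)=m\,v_0\otimes v_m$, $\mathrm{d}^3_{0,0}(L_m)=v_m\otimes v_0$, $\mathrm{d}^4_{0,0}(L_m)=m\,v_m\otimes v_0$, and $\mathrm{d}^5_{0,0}(L_0)=v_0\otimes v_0$, $\mathrm{d}^5_{0,0}(L_1)=0$, $\mathrm{d}^5_{0,0}(L_n)=-\sum_{i=1}^{n-1}v_i\otimes v_{n-i}$ for $n\geq2$, $\mathrm{d}^5_{0,0}(L_n)=\sum_{i=n}^{0}v_i\otimes v_{n-i}$ for $n\leq-1$, are 1-cocycles that are not 1-coboundaries, and $\mathrm{d}^1_{0,0},\dots,\mathrm{d}^5_{0,0}$ are linearly independent.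
   Context: The Witt algebra $\mathcal{W}$ has basis $\{L_n\mid n\in\mathbb{Z}\}$ and bracket $[L_m,L_n]=(m-n)L_{m+n}$. $\mathcal{F}_0$ has basis $\{v_n\}$ with $L_m\cdot v_n=-n v_{m+n}$, and $\mathcal{F}_0\otimes\mathcal{F}_0$ is a $\mathcal{W}$-module via $L_m\cdot(v_i\otimes v_j)=-i\,v_{m+i}\otimes v_j-j\,v_i\otimes v_{m+j}$. A 1-cocycle is a linear map $d$ with $d([x,y])=x\cdot d(y)-y\cdot d(x)$; a 1-coboundary is a map $x\mapsto x\cdot v$ for a fixed $v$ in the module. *)

From mathcomp Require Import all_boot all_order all_algebra.
Set Implicit Arguments. Unset Strict Implicit. Unset Printing Implicit Defensive.
Import Order.TTheory GRing.Theory Num.Theory.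
Local Open Scope ring_scope.

(* An element of F_0 (x) F_0 over the field K is represented by its
   coefficient function: u a b = coefficient of v_a (x) v_b.
   Genuine elements of the tensor product are the finitely supported ones. *)
Definition tens (K : fieldType) := int -> int -> K.

Definition fin_supp (K : fieldType) (u : tens K) : Prop :=
  exists N : nat, forall a b : int,
    ((N%:Z < `|a|%:Z) || (N%:Z < `|b|%:Z))%R -> u a b = 0.

(* L_m . (v_i (x) v_j) = - i v_{m+i} (x) v_j - j v_i (x) v_{m+j},
   expressed on coefficients. *)
Definition act (K : fieldType) (m : int) (u : tens K) : tens K :=
  fun a b => - ((a - m)%:~R * u (a - m) b) - ((b - m)%:~R * u a (b - m)).

(* A linear map d : W -> F_0 (x) F_0 is determined by its values d m = d(L_m). *)
Definition is_map (K : fieldType) (d : int -> tens K) : Prop :=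
  forall m, fin_supp (d m).

(* 1-cocycle: d([L_m,L_n]) = L_m . d(L_n) - L_n . d(L_m), on the basis
   (equivalent to the condition on all of W by bilinearity). *)
Definition cocycle (K : fieldType) (d : int -> tens K) : Prop :=
  is_map d /\
  forall m n a b : int,
    (m - n)%:~R * d (m + n) a b = act m (d n) a b - act n (d m) a b.

Definition coboundary (K : fieldType) (d : int -> tens K) : Prop :=
  exists v : tens K, fin_supp v /\ forall m a b, d m a b = act m v a b.

Definition vt (K : fieldType) (i j : int) : tens K :=
  fun a b => ((a == i) && (b == j))%:R.

Definition d1 (K : fieldType) (m : int) : tens K := vt K 0 m.
Definition d2 (K : fieldType) (m : int) : tens K := fun a b => m%:~R * vt K 0 m a b.
Definition d3 (K : fieldType) (m : int) : tens K := vt K m 0.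
Definition d4 (K : fieldType) (m : int) : tens K := fun a b => m%:~R * vt K m 0 a b.

Definition d5 (K : fieldType) (n : int) : tens K := fun a b =>
  if n == 0 then vt K 0 0 a b
  else if n == 1 then 0
  else if (2 <= n)%R then - (((1 <= a) && (a <= n - 1) && (b == n - a))%R)%:R
  else (((n <= a) && (a <= 0) && (b == n - a))%R)%:R.

Definition dfam (K : fieldType) (i : 'I_5) : int -> tens K :=
  match val i with
  | 0 => @d1 K | 1 => @d2 K | 2 => @d3 K | 3 => @d4 K | _ => @d5 K
  end.

(* All five maps have integer coefficients, so the cocycle identity is an
   identity between integer-valued functions, checked by case analysis and
   transported to K along the ring morphism int -> K.  A coboundary
   x |-> x . v vanishes at (L_0, v_0 (x) v_0), which rules out d1, d3 and d5;
   its coefficients on v_0 (x) v_m and v_m (x) v_0 in degree m > 0 are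
   m v_{-m,m} and m v_{m,-m}, which vanish for large m since v has finite
   support, whereas those of d2 and d4 are m, nonzero in characteristic 0.
   Linear independence is read off five coefficients. *)

From mathcomp Require Import all_boot all_order all_algebra zify ring.
Import GRing.Theory Num.Theory.
Local Open Scope ring_scope.

Definition tensZ := int -> int -> int.

Definition fin_suppZ (u : tensZ) : Prop :=
  exists N : nat, forall a b : int,
    (N%:Z < `|a|%:Z) || (N%:Z < `|b|%:Z) -> u a b = 0.

Definition actZ (m : int) (u : tensZ) : tensZ :=
  fun a b => - ((a - m) * u (a - m) b) - ((b - m) * u a (b - m)).

Definition cocycleZ (d : int -> tensZ) : Prop :=
  forall m n a b : int, (m - n) * d (m + n) a b = actZ m (d n) a b - actZ n (d m) a b.

Definition vtZ (i j : int) : tensZ := fun a b => if (a == i) && (b == j) then 1 else 0.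

Definition d1Z (m : int) : tensZ := vtZ 0 m.
Definition d2Z (m : int) : tensZ := fun a b => m * vtZ 0 m a b.
Definition d3Z (m : int) : tensZ := vtZ m 0.
Definition d4Z (m : int) : tensZ := fun a b => m * vtZ m 0 a b.

Definition nonpos (x : int) : int := if x <= 0 then 1 else 0.

(* One formula for the four cases defining d5. *)
Definition d5Z (n : int) : tensZ :=
  fun a b => if a + b == n then nonpos a + nonpos b - 1 else 0.

Definition dfamZ (i : 'I_5) : int -> tensZ :=
  match val i with
  | 0 => d1Z | 1 => d2Z | 2 => d3Z | 3 => d4Z | _ => d5Z
  end.

Lemma fin_suppZ_vtZ i j : fin_suppZ (vtZ i j).
Proof. by exists (maxn `|i| `|j|) => a b; rewrite /vtZ; case: ifP => //; lia. Qed.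

Lemma fin_suppZ_scale (c : int) u : fin_suppZ u -> fin_suppZ (fun a b => c * u a b).
Proof. by case=> N uN; exists N => a b /uN ->; rewrite mulr0. Qed.

Lemma fin_suppZ_d5Z n : fin_suppZ (d5Z n).
Proof. by exists `|n|%N => a b; rewrite /d5Z /nonpos; repeat case: ifP; lia. Qed.

Lemma fin_suppZ_dfamZ i m : fin_suppZ (dfamZ i m).
Proof.
case: i => [[|[|[|[|[|//]]]]] ?]; rewrite /dfamZ /=;
  by [exact: fin_suppZ_vtZ | apply: fin_suppZ_scale; exact: fin_suppZ_vtZ
     | exact: fin_suppZ_d5Z].
Qed.

Lemma cocycleZ_d1Z : cocycleZ d1Z.
Proof. by move=> m n a b; rewrite /actZ /d1Z /vtZ; repeat case: ifP; lia. Qed.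

Lemma cocycleZ_d2Z : cocycleZ d2Z.
Proof. by move=> m n a b; rewrite /actZ /d2Z /vtZ; repeat case: ifP; nia. Qed.

Lemma cocycleZ_d3Z : cocycleZ d3Z.
Proof. by move=> m n a b; rewrite /actZ /d3Z /vtZ; repeat case: ifP; lia. Qed.

Lemma cocycleZ_d4Z : cocycleZ d4Z.
Proof. by move=> m n a b; rewrite /actZ /d4Z /vtZ; repeat case: ifP; nia. Qed.

(* Every term has degree m + n, hence vanishes off the line a + b = m + n. *)
Lemma cocycleZ_d5Z : cocycleZ d5Z.
Proof.
move=> m n a b; rewrite /actZ /d5Z.
have [mn_ab | mn_ab] := eqVneq (a + b) (m + n).
  have -> : (a - m + b == n) by lia.
  have -> : (a + (b - m) == n) by lia.
  have -> : (a - n + b == m) by lia.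
  have -> : (a + (b - n) == m) by lia.
  by rewrite /nonpos; repeat case: ifP; lia.
have -> : (a - m + b == n) = false by lia.
have -> : (a + (b - m) == n) = false by lia.
have -> : (a - n + b == m) = false by lia.
have -> : (a + (b - n) == m) = false by lia.
lia.
Qed.

Lemma cocycleZ_dfamZ i : cocycleZ (dfamZ i).
Proof.
case: i => [[|[|[|[|[|//]]]]] ?]; rewrite /dfamZ /=;
  by [exact: cocycleZ_d1Z | exact: cocycleZ_d2Z | exact: cocycleZ_d3Z
     | exact: cocycleZ_d4Z | exact: cocycleZ_d5Z].
Qed.

Section IntegralMaps.

Variable K : fieldType.

Lemma act_intr (u : tens K) (U : tensZ) :
  (forall a b, u a b = (U a b)%:~R) -> forall m a b, act m u a b = (actZ m U a b)%:~R.
Proof. by move=> uE m a b; rewrite /act /actZ !uE !(intrD, intrM, intrN). Qed.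

Lemma cocycle_intr (d : int -> tens K) (D : int -> tensZ) :
  (forall m a b, d m a b = (D m a b)%:~R) ->
  (forall m, fin_suppZ (D m)) -> cocycleZ D -> cocycle d.
Proof.
move=> dE suppD cocD; split=> [m | m n a b].
  by have [N DN] := suppD m; exists N => a b /DN; rewrite dE => ->.
by rewrite !(act_intr _ _ (dE _)) dE -intrB -intrM cocD.
Qed.

Lemma vtE i j a b : vt K i j a b = (vtZ i j a b)%:~R.
Proof. by rewrite /vt /vtZ; case: ifP. Qed.

Lemma d5E n a b : d5 K n a b = (d5Z n a b)%:~R.
Proof.
have natE (x : nat) : x%:R = (x%:Z)%:~R :> K by [].
rewrite /d5 /vt !natE -intrN -[0 : K]/(0%:~R) -!fun_if; congr intmul.
by rewrite /d5Z /nonpos; repeat case: ifP; lia.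
Qed.

Lemma dfamE i m a b : dfam K i m a b = (dfamZ i m a b)%:~R.
Proof.
case: i => [[|[|[|[|[|//]]]]] ?]; rewrite /dfam /dfamZ /=;
  by rewrite /d1 /d2 /d3 /d4 /d1Z /d2Z /d3Z /d4Z ?vtE ?intrM ?d5E.
Qed.

Lemma coboundary_origin (d : int -> tens K) : coboundary d -> d 0 0 0 = 0.
Proof. by case=> v [_ ->]; rewrite /act subrr mul0r oppr0 addr0. Qed.

Lemma coboundary_axes (d : int -> tens K) : coboundary d ->
  exists N : nat, forall m : nat, (N < m)%N -> d m 0 m = 0 /\ d m m 0 = 0.
Proof.
case=> v [[N vN] dE]; exists N => m ltNm; rewrite !dE /act !subrr !sub0r !mul0r.
by rewrite !vN ?mulr0 ?oppr0 ?addr0 //; lia.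
Qed.

Lemma dfam_not_coboundary : [pchar K] =i pred0 -> forall i, ~ coboundary (dfam K i).
Proof.
move=> /pcharf0P charK0 [[|[|[|[|[|//]]]]] ?].
- by move/coboundary_origin/eqP; rewrite dfamE oner_eq0.
- case/coboundary_axes=> N /(_ N.+1 (ltnSn N)) [/eqP + _].
  by rewrite dfamE /dfamZ /= /d2Z /vtZ !eqxx mulr1 charK0.
- by move/coboundary_origin/eqP; rewrite dfamE oner_eq0.
- case/coboundary_axes=> N /(_ N.+1 (ltnSn N)) [_ /eqP].
  by rewrite dfamE /dfamZ /= /d4Z /vtZ !eqxx mulr1 charK0.
- by move/coboundary_origin/eqP; rewrite dfamE oner_eq0.
Qed.

Lemma dfam_free (c : 'I_5 -> K) :
  (forall m a b, \sum_(i < 5) c i * dfam K i m a b = 0) -> forall i, c i = 0.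
Proof.
move=> c_rel.
have coef m a b : \sum_(i < 5) c i * (dfamZ i m a b)%:~R = 0.
  by rewrite -[RHS](c_rel m a b); apply: eq_bigr => i _; rewrite dfamE.
set c0 := c ord0; set c1 := c (lift ord0 ord0); set c2 := c (lift ord0 (lift ord0 ord0)).
set c3 := c (lift ord0 (lift ord0 (lift ord0 ord0))).
set c4 := c (lift ord0 (lift ord0 (lift ord0 (lift ord0 ord0)))).
have sumE m a b : \sum_(i < 5) c i * (dfamZ i m a b)%:~R =
    c0 * (d1Z m a b)%:~R + c1 * (d2Z m a b)%:~R + c2 * (d3Z m a b)%:~R
    + c3 * (d4Z m a b)%:~R + c4 * (d5Z m a b)%:~R.
  by rewrite !big_ord_recl big_ord0 addr0 !addrA.
have := coef 0 0 0; have := coef 1 0 1; have := coef 2 0 2;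
have := coef 1 1 0; have := coef 2 2 0.
rewrite !sumE /d1Z /d2Z /d3Z /d4Z /d5Z /vtZ /nonpos /=.
rewrite !(mulr0, mulr1, mul1r, mul0r, addr0, add0r, subrr, addrK).
rewrite ?(rmorph0, rmorph1, mulr0, mulr1, addr0, add0r) => e23 e3 e01 e1 e024.
have c1z : c1 = 0.
  have -> : c1 = (c0 + c1 * 2%:~R) - (c0 + c1) by ring.
  by rewrite e01 e1 subrr.
have c3z : c3 = 0.
  have -> : c3 = (c2 + c3 * 2%:~R) - (c2 + c3) by ring.
  by rewrite e23 e3 subrr.
have c0z : c0 = 0 by rewrite -e1 c1z addr0.
have c2z : c2 = 0 by rewrite -e3 c3z addr0.
have c4z : c4 = 0 by rewrite -e024 c0z c2z !add0r.
by case=> -[|[|[|[|[|//]]]]] ?;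
  [rewrite -c0z | rewrite -c1z | rewrite -c2z | rewrite -c3z | rewrite -c4z];
  congr c; exact: val_inj.
Qed.

End IntegralMaps.

Theorem propositionP3p0 (K : fieldType) (hK : [pchar K] =i pred0) :
  (forall i : 'I_5, cocycle (dfam K i) /\ ~ coboundary (dfam K i)) /\
  (forall c : 'I_5 -> K,
     (forall (m a b : int), \sum_(i < 5) c i * dfam K i m a b = 0) ->
     forall i, c i = 0).
Proof.
split; last exact: dfam_free.
move=> i; split; last exact: dfam_not_coboundary.
exact: cocycle_intr (dfamE K i) (fin_suppZ_dfamZ i) (cocycleZ_dfamZ i).
Qed.
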